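(* Let $R$ be a unique factorization domain. Let $1\leqslant n\leqslant m$, let $s_1,\dots,s_n\in\operatorname{Sqf} R$ with $s_i\mid s_{i+1}$ for $i=1,\dots,n-1$, and let $t_1,\dots,t_m\in\operatorname{Sqf} R$ with $t_i\mid t_{i+1}$ for $i=1,\dots,m-1$. If $s_1s_2\cdots s_n=t_1t_2\cdots t_m$, then $s_i\sim t_{i+m-n}$ for $i=1,\dots,n$, and, if $m>n$, then $t_i\in R^{\ast}$ for $i=1,\dots,m-n$.
   Context: $R^{\ast}$ denotes the set of invertible elements of $R$; $a\sim b$ means $a$ and $b$ are associated; $a\mid b$ means $a$ divides $b$. An element $a\in R$ is square-free if it cannot be written as $a=b^2c$ with $b\in R\setminus R^{\ast}$ and $c\in R$; $\operatorname{Sqf} R$ denotes the set of square-free elements of $R$. *)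

From mathcomp Require Import all_boot all_order all_algebra.
Set Implicit Arguments. Unset Strict Implicit. Unset Printing Implicit Defensive.
Import GRing.Theory.
Local Open Scope ring_scope.

Definition dvdR (R : comRingType) (a b : R) : Prop := exists c : R, b = a * c.

Definition assocR (R : comUnitRingType) (a b : R) : Prop :=
  exists u : R, u \is a GRing.unit /\ a = u * b.

Definition irredR (R : comUnitRingType) (p : R) : Prop :=
  p != 0 /\ p \isn't a GRing.unit /\
  forall a b : R, p = a * b -> a \is a GRing.unit \/ b \is a GRing.unit.

Definition UFD (R : idomainType) : Prop :=
  (forall a : R, a != 0 -> a \isn't a GRing.unit ->
     exists f : seq R, (forall p, p \in f -> irredR p) /\ a = \prod_(p <- f) p)
  /\
  (forall f g : seq R,
     (forall p, p \in f -> irredR p) -> (forall p, p \in g -> irredR p) ->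
     \prod_(p <- f) p = \prod_(p <- g) p ->
     exists g' : seq R, perm_eq g g' /\ size f = size g' /\
       forall i, (i < size f)%N -> assocR (nth 0 f i) (nth 0 g' i)).

Definition sqfree (R : comUnitRingType) (a : R) : Prop :=
  ~ exists b c : R, b \isn't a GRing.unit /\ a = b ^+ 2 * c.

From mathcomp Require Import all_boot all_order all_algebra.
From mathcomp Require Import ring zify.
From Stdlib Require Import ClassicalEpsilon.
Import GRing.Theory.
Set Implicit Arguments. Unset Strict Implicit.
Local Open Scope ring_scope.

(* We induct on the number of irreducible factors of the common product P.
   An irreducible p dividing P is prime.  In a divisibility chain the indices
   i with p | s_i form a final segment, and since the s_i are square-free, p
   divides each of these s_i exactly once.  Hence P = p^a * S with p not
   dividing S, where a is the length of that segment and S is the product of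
   the s_i with p divided out; likewise P = p^b * T for the t_i.  Comparing
   p-exponents gives a = b and S = T, the stripped chains are again
   square-free divisibility chains, and their product has fewer irreducible
   factors, so induction applies.  Since both final segments have length a,
   p divides s_i exactly when it divides t_(i+m-n). *)

Section Divisibility.
Variable R : comNzRingType.
Implicit Types a b c : R.

Lemma dvdR_refl a : dvdR a a.
Proof. by exists 1; rewrite mulr1. Qed.

Lemma dvdR_trans a b c : dvdR a b -> dvdR b c -> dvdR a c.
Proof. by move=> [x ->] [y ->]; exists (x * y); rewrite mulrA. Qed.

Lemma dvdR_mulr a b c : dvdR a b -> dvdR a (b * c).
Proof. by move=> [x ->]; exists (x * c); rewrite mulrA. Qed.

Lemma dvdR_mull a b c : dvdR a b -> dvdR a (c * b).
Proof. by rewrite mulrC; apply: dvdR_mulr. Qed.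

Lemma dvdR_prod (I : eqType) (r : seq I) (F : I -> R) i :
  i \in r -> dvdR (F i) (\prod_(k <- r) F k).
Proof. by move=> ir; rewrite (big_rem i ir); exists (\prod_(k <- rem i r) F k). Qed.

End Divisibility.

Lemma dvdR_unit (R : comUnitRingType) (a b : R) :
  b \is a GRing.unit -> dvdR a b -> a \is a GRing.unit.
Proof. by move=> Hb [c Ec]; move: Hb; rewrite Ec unitrM => /andP[]. Qed.

Lemma irredR_Nunit (R : comUnitRingType) (p : R) :
  irredR p -> p \isn't a GRing.unit.
Proof. by case=> _ []. Qed.

Lemma irredR_mull (R : idomainType) (u p : R) :
  u \is a GRing.unit -> irredR p -> irredR (u * p).
Proof.
move=> Hu [p0 [pu Hp]].
have u0 : u != 0 by apply: contraTneq Hu => ->; rewrite unitr0.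
split; first by rewrite mulf_neq0.
split; first by rewrite unitrM Hu.
move=> a b E.
have : p = (u^-1 * a) * b by rewrite -mulrA -E mulKr.
case/Hp => [Hua|]; last by right.
by left; rewrite -(mulVKr Hu a) unitrM Hu.
Qed.

Lemma sqfree_dvdR (R : comUnitRingType) (d a : R) :
  dvdR d a -> sqfree a -> sqfree d.
Proof.
move=> [e ->] Ha [b [c [Hb Ed]]].
by apply: Ha; exists b, (c * e); rewrite Ed mulrA.
Qed.

Lemma sqfree_neq0 (R : comUnitRingType) (a : R) : sqfree a -> a != 0.
Proof.
by move=> Ha; apply/eqP => a0; apply: Ha; exists 0, 0; rewrite unitr0 a0 mulr0.
Qed.

Section Factorization.
Variables (R : idomainType) (HR : UFD R).
Implicit Types (a b c d p u x y : R) (f g : seq R).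

Definition irreds (f : seq R) : Prop := forall x, x \in f -> irredR x.

Lemma irreds_cons x f : irreds (x :: f) <-> irredR x /\ irreds f.
Proof.
split=> [Hf | [Hx Hf] y]; last by rewrite in_cons => /orP[/eqP -> | /Hf].
by split=> [|y yf]; apply: Hf; rewrite in_cons ?eqxx ?yf ?orbT.
Qed.

Lemma ufd_factor a : a != 0 ->
  exists u f, [/\ u \is a GRing.unit, irreds f & a = u * \prod_(x <- f) x].
Proof.
move=> a0; have [au | aNu] := boolP (a \is a GRing.unit).
  by exists a, [::]; rewrite big_nil mulr1.
have [f [Hf ->]] := HR.1 a a0 aNu.
by exists 1, f; rewrite mul1r unitr1.
Qed.

Lemma irredR_dvdR_factor u f g y :
  u \is a GRing.unit -> irreds f -> irreds g ->
  u * \prod_(x <- f) x = \prod_(x <- g) x ->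
  y \in g -> exists2 x, x \in f & dvdR y x.
Proof.
move=> Hu Hf Hg E yg; have Hy := Hg y yg.
case: f => [|x r] in Hf E *.
  rewrite big_nil mulr1 in E.
  move: Hu; rewrite E => /dvdR_unit /(_ (dvdR_prod id yg)).
  by move/negP: (irredR_Nunit Hy).
(* Absorb the unit into the first factor, so that uniqueness of factorization applies. *)
have [/(irredR_mull Hu) Hux Hr] := (irreds_cons x r).1 Hf.
have E' : \prod_(z <- u * x :: r) z = \prod_(z <- g) z.
  by rewrite -E !big_cons mulrA.
have [g' [pg [sz Ha]]] := HR.2 _ _ ((irreds_cons _ _).2 (conj Hux Hr)) Hg E'.
have yg' : y \in g' by rewrite -(perm_mem pg).
have ky : (index y g' < size g')%N by rewrite index_mem.
rewrite -sz in ky.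
have [v [_ Ev]] := Ha _ ky; rewrite nth_index // in Ev.
case: (index y g') ky Ev => [_ /= Ev | k k_lt /= Ev].
  exists x; rewrite ?mem_head //.
  by exists (u^-1 * v); rewrite mulrCA [y * v]mulrC -Ev mulKr.
by exists (nth 0 r k); [rewrite in_cons mem_nth ?orbT | exists v; rewrite Ev mulrC].
Qed.

Lemma irredR_prime p a b : irredR p -> dvdR p (a * b) -> dvdR p a \/ dvdR p b.
Proof.
move=> Hp [c Ec].
have [-> | a0] := eqVneq a 0; first by left; exists 0; rewrite mulr0.
have [-> | b0] := eqVneq b 0; first by right; exists 0; rewrite mulr0.
have c0 : c != 0 by apply: contraNneq (mulf_neq0 a0 b0) => c0; rewrite Ec c0 mulr0.
have [ua [fa [Hua Hfa Ea]]] := ufd_factor a0.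
have [ub [fb [Hub Hfb Eb]]] := ufd_factor b0.
have [uc [fc [Huc Hfc Ecc]]] := ufd_factor c0.
have Hfab : irreds (fa ++ fb) by move=> x; rewrite mem_cat => /orP[/Hfa | /Hfb].
have Hu : ua * ub / uc \is a GRing.unit by rewrite !unitrM unitrV Hua Hub Huc.
have E : ua * ub / uc * \prod_(x <- fa ++ fb) x = \prod_(x <- p :: fc) x.
  apply: (mulrI Huc); rewrite big_cat big_cons /=.
  have -> : uc * (ua * ub / uc * ((\prod_(x <- fa) x) * \prod_(x <- fb) x))
      = uc / uc * (a * b) by rewrite Ea Eb; ring.
  by rewrite mulrV // mul1r Ec Ecc mulrCA.
have Hpfc : irreds (p :: fc) by apply/irreds_cons.
have [x + px] := irredR_dvdR_factor Hu Hfab Hpfc E (mem_head _ _).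
rewrite mem_cat => /orP[] xf; [left; rewrite Ea | right; rewrite Eb];
  exact/dvdR_mull/(dvdR_trans px)/dvdR_prod.
Qed.

Lemma irredR_dvdR_prod p (I : eqType) (r : seq I) (F : I -> R) :
  irredR p -> dvdR p (\prod_(k <- r) F k) -> exists2 k, k \in r & dvdR p (F k).
Proof.
move=> Hp; elim: r => [|x r IH].
  by rewrite big_nil => /(dvdR_unit (unitr1 _)); move/negP: (irredR_Nunit Hp).
rewrite big_cons => /(irredR_prime Hp) [H | /IH [k kr H]].
  by exists x; rewrite ?mem_head.
by exists k; rewrite // in_cons kr orbT.
Qed.

Lemma dvdR_factor_size f u d c : irreds f -> u \is a GRing.unit ->
  u * \prod_(x <- f) x = d * c ->
  exists u' f', [/\ u' \is a GRing.unit, irreds f',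
     c = u' * \prod_(x <- f') x & (size f' <= size f)%N].
Proof.
elim: f => [|x r IH] in d c *.
  move=> _ Hu E; exists c, [::]; rewrite big_nil mulr1; split => //.
  by move: Hu; rewrite big_nil mulr1 in E; rewrite E unitrM => /andP[].
move=> /irreds_cons[Hx Hr] Hu; have x0 : x != 0 by case: Hx.
rewrite big_cons mulrCA => E.
have /(irredR_prime Hx) : dvdR x (d * c) by rewrite -E; exists (u * \prod_(y <- r) y).
case=> [[d1 Ed] | [c1 Ec]].
  have /IH [|//|u' [f' [Hu' Hf' -> Hs]]] // : u * \prod_(y <- r) y = d1 * c.
    by apply: (mulfI x0); rewrite E Ed mulrA.
  by exists u', f'; split => //; apply: leqW.
have /IH [|//|u' [f' [Hu' Hf' Ec1 Hs]]] // : u * \prod_(y <- r) y = d * c1.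
  by apply: (mulfI x0); rewrite E Ec mulrCA.
exists u', (x :: f'); split => //; first exact/irreds_cons.
by rewrite Ec Ec1 big_cons mulrCA.
Qed.

End Factorization.

Section Strip.
Variable R : comNzRingType.
Implicit Types a b p : R.

Definition dvdRb p a : bool :=
  if excluded_middle_informative (dvdR p a) then true else false.

Lemma dvdRP p a : reflect (dvdR p a) (dvdRb p a).
Proof. by rewrite /dvdRb; case: excluded_middle_informative => H; constructor. Qed.

Definition strip p a : R :=
  match excluded_middle_informative (dvdR p a) with
  | left H => proj1_sig (constructive_indefinite_description _ H)
  | right _ => a
  end.

Lemma stripE p a : a = (if dvdRb p a then p else 1) * strip p a.
Proof.
rewrite /dvdRb /strip; case: excluded_middle_informative => H; last by rewrite mul1r.
by case: constructive_indefinite_description.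
Qed.

Lemma strip_dvdR p a : dvdR (strip p a) a.
Proof. by exists (if dvdRb p a then p else 1); rewrite mulrC -stripE. Qed.

End Strip.

Lemma strip_Ndvd (R : comUnitRingType) (p a : R) :
  p \isn't a GRing.unit -> sqfree a -> ~ dvdR p (strip p a).
Proof.
move=> pNu Ha [c Ec]; have Ea := stripE p a.
case: dvdRP Ea => [_ | pNa] Ea.
  by apply: Ha; exists p, c; split => //; rewrite Ea Ec mulrA expr2.
by apply: pNa; rewrite Ea mul1r; exists c.
Qed.

Lemma dvdR_strip (R : idomainType) (HR : UFD R) (p a b : R) :
  irredR p -> dvdR a b -> dvdR (strip p a) (strip p b).
Proof.
move=> Hp [c Ec]; have p0 : p != 0 by case: Hp.
have Ea := stripE p a; have Eb := stripE p b.
case: (dvdRP p a) Ea => pa Ea; case: (dvdRP p b) Eb => pb Eb.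
- by exists c; apply: (mulfI p0); rewrite -Eb Ec {1}Ea mulrA.
- by case: pb; rewrite Ec; apply: dvdR_mulr.
- rewrite mul1r in Ea.
  have /(irredR_prime HR Hp) [//|[d Ed]] : dvdR p (a * c) by rewrite -Ec.
  by exists d; apply: (mulfI p0); rewrite -Eb Ec Ed -Ea mulrCA.
- by rewrite mul1r in Ea; rewrite mul1r in Eb; rewrite -Ea -Eb; exists c.
Qed.

Lemma chain_dvdR (R : comNzRingType) n (s : nat -> R) :
  (forall i, (1 <= i < n)%N -> dvdR (s i) (s i.+1)) ->
  forall i i', (1 <= i)%N -> (i <= i')%N -> (i' <= n)%N -> dvdR (s i) (s i').
Proof.
move=> Hd i; elim=> [|i' IH] i1 ii' i'n; first lia.
have [-> | ne] := eqVneq i i'.+1; first exact: dvdR_refl.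
exact: dvdR_trans (IH i1 ltac:(lia) ltac:(lia)) (Hd i' ltac:(lia)).
Qed.

Lemma upward_closed_threshold (D : nat -> bool) n :
  (forall i i', (1 <= i)%N -> (i <= i')%N -> (i' <= n)%N -> D i -> D i') ->
  exists j, (1 <= j <= n.+1)%N /\ forall i, (1 <= i <= n)%N -> D i = (j <= i)%N.
Proof.
elim: n => [|n IH] HD; first by exists 1%N; split => // i; lia.
have [j [Hj Dj]] := IH (fun i i' h1 h2 h3 => HD i i' h1 h2 (leqW h3)).
case Dn: (D n.+1).
  exists j; split=> [|i Hi]; first lia.
  have [ile | igt] := leqP i n; first by apply: Dj; lia.
  have -> : i = n.+1 by lia.
  by rewrite Dn; apply/esym/idP; lia.
exists n.+2; split=> [|i Hi]; first lia.
have -> : (n.+2 <= i)%N = false by apply/negbTE; lia.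
apply/negbTE/negP => Di.
by move: (HD i n.+1 ltac:(lia) ltac:(lia) (leqnn _) Di); rewrite Dn.
Qed.

Lemma prod_threshold (R : comNzRingType) (p : R) n j (s s' : nat -> R) :
  (1 <= j <= n.+1)%N ->
  (forall i, (1 <= i <= n)%N -> s i = (if (j <= i)%N then p else 1) * s' i) ->
  \prod_(1 <= i < n.+1) s i = p ^+ (n.+1 - j) * \prod_(1 <= i < n.+1) s' i.
Proof.
move=> /andP[j1 jn] Hs.
rewrite (eq_big_nat _ _ (F2 := fun i => (if (j <= i)%N then p else 1) * s' i));
  last by move=> i Hi; apply: Hs; lia.
rewrite big_split /= (big_cat_nat j1 jn) /= big_nat_cond big1 ?mul1r; last first.
  by move=> i /andP[/andP[_ ij] _]; rewrite leqNgt ij.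
by rewrite (eq_big_nat _ _ (F2 := fun => p)) ?prodr_const_nat // => i /andP[->].
Qed.

Lemma expr_mul_Ndvd_inj (R : idomainType) (p X Y : R) a b :
  p != 0 -> p ^+ a * X = p ^+ b * Y -> ~ dvdR p X -> ~ dvdR p Y -> a = b /\ X = Y.
Proof.
wlog ab : a b X Y / (a <= b)%N.
  move=> Hwlog p0 E pX pY; have [ab | /ltnW ba] := leqP a b; first exact: Hwlog.
  by have [-> ->] := Hwlog _ _ _ _ ba p0 (esym E) pY pX.
move=> p0 E pX _; rewrite -(subnKC ab) exprD -mulrA in E.
move/(mulfI (expf_neq0 a p0)): E; case: (b - a)%N (subnKC ab) => [|c] Eb E.
  by rewrite addn0 in Eb; rewrite E expr0 mul1r.
by case: pX; rewrite E exprS -mulrA; exists (p ^+ c * Y).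
Qed.

Definition sqfree_chain (R : comUnitRingType) n (s : nat -> R) : Prop :=
  (forall i, (1 <= i <= n)%N -> sqfree (s i)) /\
  (forall i, (1 <= i < n)%N -> dvdR (s i) (s i.+1)).

Definition chain_aligned (R : comUnitRingType) n m (s t : nat -> R) : Prop :=
  (forall i, (1 <= i <= n)%N -> assocR (s i) (t (i + m - n)%N)) /\
  ((n < m)%N -> forall i, (1 <= i <= m - n)%N -> t i \is a GRing.unit).

Section SquareFreeChains.
Variables (R : idomainType) (HR : UFD R).
Implicit Types (p : R) (s t : nat -> R).

Lemma sqfree_chain_strip p n s : irredR p -> sqfree_chain n s ->
  sqfree_chain n (fun i => strip p (s i)).
Proof.
move=> Hp [Hs Hd]; split=> i Hi; first exact: sqfree_dvdR (strip_dvdR _ _) (Hs i Hi).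
exact: (dvdR_strip HR Hp (Hd i Hi)).
Qed.

Lemma sqfree_chain_split p n s : irredR p -> sqfree_chain n s ->
  exists j, [/\ (1 <= j <= n.+1)%N,
    forall i, (1 <= i <= n)%N -> s i = (if (j <= i)%N then p else 1) * strip p (s i),
    \prod_(1 <= i < n.+1) s i = p ^+ (n.+1 - j) * \prod_(1 <= i < n.+1) strip p (s i)
  & ~ dvdR p (\prod_(1 <= i < n.+1) strip p (s i))].
Proof.
move=> Hp [Hs Hd].
have [j [Hj Dj]] : exists j, (1 <= j <= n.+1)%N /\
    forall i, (1 <= i <= n)%N -> dvdRb p (s i) = (j <= i)%N.
  apply: upward_closed_threshold => i i' h1 h2 h3 /dvdRP pi; apply/dvdRP.
  exact: dvdR_trans pi (chain_dvdR Hd h1 h2 h3).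
have Es : forall i, (1 <= i <= n)%N ->
    s i = (if (j <= i)%N then p else 1) * strip p (s i).
  by move=> i Hi; rewrite -Dj // -stripE.
exists j; split=> //; first exact: prod_threshold.
move=> /(irredR_dvdR_prod HR Hp) [i]; rewrite mem_index_iota ltnS => Hi.
exact: strip_Ndvd (irredR_Nunit Hp) (Hs i Hi).
Qed.

End SquareFreeChains.

Lemma chain_aligned_unit (R : comUnitRingType) n m (s t : nat -> R) : (n <= m)%N ->
  \prod_(1 <= i < n.+1) s i \is a GRing.unit ->
  \prod_(1 <= i < n.+1) s i = \prod_(1 <= i < m.+1) t i ->
  chain_aligned n m s t.
Proof.
move=> nm Hu E.
have Ht i : (1 <= i <= m)%N -> t i \is a GRing.unit.
  move=> Hi; apply: (dvdR_unit (b := \prod_(1 <= i < m.+1) t i)); first by rewrite -E.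
  by apply: dvdR_prod; rewrite mem_index_iota ltnS.
split=> [i Hi | _ i Hi]; last by apply: Ht; lia.
have Hs : s i \is a GRing.unit.
  by apply: dvdR_unit Hu (dvdR_prod s _); rewrite mem_index_iota ltnS.
have Hti : t (i + m - n)%N \is a GRing.unit by apply: Ht; lia.
exists (s i / t (i + m - n)%N); split; first by rewrite unitrM unitrV Hs Hti.
by rewrite divrK.
Qed.

Lemma chain_aligned_mul (R : comUnitRingType) (p : R) n m j k (s t s' t' : nat -> R) :
  (n <= m)%N -> (1 <= j <= n.+1)%N -> (1 <= k <= m.+1)%N ->
  (n.+1 - j = m.+1 - k)%N ->
  (forall i, (1 <= i <= n)%N -> s i = (if (j <= i)%N then p else 1) * s' i) ->
  (forall i, (1 <= i <= m)%N -> t i = (if (k <= i)%N then p else 1) * t' i) ->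
  chain_aligned n m s' t' -> chain_aligned n m s t.
Proof.
move=> nm Hj Hk jk Es Et [Ha Hu]; split=> [i Hi | nm' i Hi].
  have [w [Hw Ew]] := Ha i Hi; exists w; split=> //.
  rewrite Es // Et; last lia.
  have -> : (k <= i + m - n)%N = (j <= i)%N by apply/idP/idP; lia.
  by rewrite Ew mulrCA.
rewrite Et; last lia.
have -> : (k <= i)%N = false by apply/negbTE; lia.
by rewrite mul1r; apply: Hu.
Qed.

Lemma sqfree_chain_aligned (R : idomainType) (HR : UFD R) n m (s t : nat -> R)
    N u (f : seq R) :
  (n <= m)%N -> (size f <= N)%N -> u \is a GRing.unit -> irreds f ->
  \prod_(1 <= i < n.+1) s i = u * \prod_(x <- f) x ->
  sqfree_chain n s -> sqfree_chain m t ->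
  \prod_(1 <= i < n.+1) s i = \prod_(1 <= i < m.+1) t i ->
  chain_aligned n m s t.
Proof.
move=> nm; elim: N u f s t => [|N IH] u [|p r] s t //= Hsz Hu Hf Es Hs Ht E;
  try by apply: chain_aligned_unit => //; rewrite Es big_nil mulr1.
have /irreds_cons [Hp Hr] := Hf; have p0 : p != 0 by case: Hp.
have [j [Hj Esj Eps Nps]] := sqfree_chain_split HR Hp Hs.
have [k [Hk Etk Ept Npt]] := sqfree_chain_split HR Hp Ht.
have [jk ES] := expr_mul_Ndvd_inj p0 (etrans (esym Eps) (etrans E Ept)) Nps Npt.
have j_pos : (0 < n.+1 - j)%N.
  rewrite lt0n; apply/eqP => j0; apply: Nps.
  rewrite j0 expr0 mul1r in Eps; rewrite -Eps Es big_cons.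
  by exists (u * \prod_(y <- r) y); rewrite mulrCA.
have E' : u * \prod_(y <- r) y =
    p ^+ (n.+1 - j).-1 * \prod_(1 <= i < n.+1) strip p (s i).
  apply: (mulfI p0).
  by rewrite [RHS]mulrA -exprS prednK // -Eps Es big_cons mulrCA.
have [u' [f' [Hu' Hf' Es' Hsz']]] := dvdR_factor_size HR Hr Hu E'.
apply: chain_aligned_mul nm Hj Hk jk Esj Etk _.
apply: (IH u' f') => //; first exact: leq_trans Hsz' Hsz.
- exact: sqfree_chain_strip.
- exact: sqfree_chain_strip.
Qed.

Theorem proposition2 (R : idomainType) (HR : UFD R) (n m : nat)
  (s t : nat -> R) :
  (1 <= n)%N -> (n <= m)%N ->
  (forall i, (1 <= i <= n)%N -> sqfree (s i)) ->
  (forall i, (1 <= i < n)%N -> dvdR (s i) (s i.+1)) ->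
  (forall i, (1 <= i <= m)%N -> sqfree (t i)) ->
  (forall i, (1 <= i < m)%N -> dvdR (t i) (t i.+1)) ->
  \prod_(1 <= i < n.+1) s i = \prod_(1 <= i < m.+1) t i ->
  (forall i, (1 <= i <= n)%N -> assocR (s i) (t (i + m - n)%N)) /\
  ((n < m)%N -> forall i, (1 <= i <= m - n)%N -> t i \is a GRing.unit).
Proof.
move=> _ nm Hs Hsd Ht Htd E.
have P0 : \prod_(1 <= i < n.+1) s i != 0.
  rewrite prodf_seq_neq0; apply/allP => i; rewrite mem_index_iota ltnS => Hi.
  exact: sqfree_neq0 (Hs i Hi).
have [u [f [Hu Hf EP]]] := ufd_factor HR P0.
by apply: (sqfree_chain_aligned HR nm (leqnn _) Hu Hf EP) => //; split.
Qed.
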